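(* Let $\mathbf b=(b_1,\dots,b_{k-1})$ be a sequence of non-negative integers with $|\mathbf b|=\binom k2$. The following are equivalent: (i) $\mathbf b$ is a perfect matching sequence; (ii) the coefficient of $v^{\mathbf b}=v_1^{b_1}\cdots v_{k-1}^{b_{k-1}}$ in the polynomial $V(\lambda)=\prod_{1\le i<j\le k}(\lambda_j-\lambda_i)$, where $\lambda_i:=v_i+v_{i+1}+\dots+v_{k-1}$ for $1\le i\le k$ (so $\lambda_k=0$), is non-zero; (iii) $\sum_{j=s}^t b_j\ge\binom{t-s+2}{2}$ for every $1\le s\le t\le k-1$.
   Context: Fix an integer $k\ge 2$. For a sequence $\mathbf b=(b_1,\dots,b_{k-1})$ of non-negative integers write $|\mathbf b|=\sum_i b_i$. The bipartite graph $\mathcal B_{\mathbf b}$ has upper vertex class $U=\{(j,l):1\le j\le l\le k-1\}$ and lower vertex class $D_{\mathbf b}=\{(i,t):1\le i\le k-1,\ 1\le t\le b_i\}$, with an edge between $(j,l)\in U$ and $(i,t)\in D_{\mathbf b}$ if and only if $j\le i\le l$. The sequence $\mathbf b$ is a matching sequence if $\mathcal B_{\mathbf b}$ has a matching covering all of $D_{\mathbf b}$, and a perfect matching sequence if moreover $|\mathbf b|=\binom k2$. The $v_i$ are independent variables. *)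

From mathcomp Require Import all_boot all_order all_algebra.
Set Implicit Arguments. Unset Strict Implicit. Unset Printing Implicit Defensive.
Import GRing.Theory.
Local Open Scope ring_scope.

(* Variables v_1..v_{n} are indexed 0-based by 'I_n (v_{m+1} <-> m). *)
Definition monom (n : nat) := {ffun 'I_n -> nat}.

(* Integer polynomials in n commuting variables, represented as formal
   (unnormalised) linear combinations of monomials. *)
Definition mpoly (n : nat) := seq (monom n * int).

Definition mon_mul n (a b : monom n) : monom n := [ffun i => (a i + b i)%N].
Definition mon_var n (i : 'I_n) : monom n := [ffun j => nat_of_bool (j == i)].
Definition mon_one n : monom n := [ffun _ => 0%N].

Definition mp_zero n : mpoly n := [::].
Definition mp_one n : mpoly n := [:: (mon_one n, 1)].
Definition mp_var n (i : 'I_n) : mpoly n := [:: (mon_var i, 1)].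
Definition mp_add n (p q : mpoly n) : mpoly n := p ++ q.
Definition mp_opp n (p : mpoly n) : mpoly n := [seq (a.1, - a.2) | a <- p].
Definition mp_sub n (p q : mpoly n) : mpoly n := mp_add p (mp_opp q).
Definition mp_mul n (p q : mpoly n) : mpoly n :=
  [seq (mon_mul a.1 b.1, a.2 * b.2) | a <- p, b <- q].

Definition mp_coef n (p : mpoly n) (m : monom n) : int :=
  \sum_(a <- p | a.1 == m) a.2.

(* lambda_i = v_i + ... + v_{k-1} (1-based); here 0-based: i : 'I_k,
   lambda i = sum of the variables with (0-based) index m >= i,
   so lambda (k-1) = 0. *)
Definition lambda (k : nat) (i : nat) : mpoly k.-1 :=
  foldr (@mp_add _) (mp_zero _)
    [seq mp_var m | m : 'I_k.-1 <- enum 'I_k.-1 & (i <= m)%N].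

Definition Vpoly (k : nat) : mpoly k.-1 :=
  foldr (@mp_mul _) (mp_one _)
    (flatten [seq [seq mp_sub (lambda k j) (lambda k i)
                     | j <- iota 0 k & (i < j)%N] | i <- iota 0 k]).

(* matching sequence: B_b has a matching covering D_b, i.e. an injective
   map from D_b = {(i,t) : t < b_i} to U = {(j,l) : j <= l} along edges
   (j <= i <= l).  All indices 0-based. *)
Definition matching_seq (n : nat) (b : 'I_n -> nat) : Prop :=
  exists f : {i : 'I_n & 'I_(b i)} -> 'I_n * 'I_n,
    injective f /\
    forall x, ((f x).1 <= tag x)%N /\ (tag x <= (f x).2)%N.

Definition perfect_matching_seq (k : nat) (b : 'I_k.-1 -> nat) : Prop :=
  matching_seq b /\ (\sum_(i < k.-1) b i)%N = 'C(k, 2).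

From mathcomp Require Import all_boot all_order all_algebra zify.
Set Implicit Arguments. Unset Strict Implicit. Unset Printing Implicit Defensive.
Import GRing.Theory.

(* Expanding [V(lambda)], the factor [lambda_j - lambda_i] for [i < j] is
   [-(v_i + ... + v_(j-1))], so the coefficient of [v^b] is [(-1)^(C(k,2))] times
   the number of ways to pick, for every pair [i < j], an index [i <= p < j] so
   that each index [q] is picked [b_q] times: there is no cancellation, and (ii)
   says that such a picking exists.  Indexing the pair [(j, l + 1)] by the upper
   vertex [(j, l)], a picking is a labelling of the upper vertices by adjacent
   lower indices with fibres of sizes [b_i], i.e. (as [|b| = |U|]) a perfect
   matching.  A picking forces (iii), as the [C(t-s+2, 2)] pairs inside [s, t+1]
   all pick indices in [s, t].  Conversely (iii) is Hall's condition for the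
   intervals [[i, j)], and a picking is built greedily: at the smallest left
   endpoint [s0], either [b_s0 = 0] and the intervals starting at [s0] may as
   well start at [s0 + 1], or [s0] is picked by the interval starting there that
   ends first. *)

Section All2.
Variables (S T : Type) (r : S -> T -> bool).

Lemma all2_size s t : all2 r s t -> size s = size t.
Proof. by elim: s t => [|x s IH] [|y t] //= /andP[_ /IH ->]. Qed.

Lemma all2_cat s1 s2 t1 t2 : size s1 = size t1 ->
  all2 r (s1 ++ s2) (t1 ++ t2) = all2 r s1 t1 && all2 r s2 t2.
Proof. by elim: s1 t1 => [|x s1 IH] [|y t1] //= [/IH ->]; rewrite andbA. Qed.

Lemma all2_nth x0 y0 s t i : all2 r s t -> i < size s -> r (nth x0 s i) (nth y0 t i).
Proof.
by elim: s t i => [|x s IH] [|y t] [|i] //= /andP[// rxy /IH]; apply.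
Qed.

Lemma all2_mapr (g : S -> T) s : all2 r s (map g s) = all (fun x => r x (g x)) s.
Proof. by elim: s => //= x s ->. Qed.

Lemma leq_count_all2 (P : pred S) (Q : pred T) s t : all2 r s t ->
  (forall x y, r x y -> P x -> Q y) -> count P s <= count Q t.
Proof.
move=> + PQ; elim: s t => [|x s IH] [|y t] //= /andP[rxy /IH le_st].
by apply: leq_add => //; case Px: (P x); rewrite // (PQ x y).
Qed.

Lemma all2_allr (P : pred S) (Q : pred T) s t : all P s -> all2 r s t ->
  (forall x y, P x -> r x y -> Q y) -> all Q t.
Proof.
move=> + + PQ; elim: s t => [|x s IH] [|y t] //= /andP[Px Ps] /andP[rxy rst].
by rewrite (PQ x y) // IH.
Qed.

End All2.

Lemma sub_in_count (T : eqType) (a1 a2 : pred T) s :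
  {in s, subpred a1 a2} -> count a1 s <= count a2 s.
Proof.
move=> sub12; rewrite -(@eq_in_count _ [pred x | a1 x && (x \in s)]) => [|x xs].
  by apply: sub_count => x /andP[a1x /sub12]; apply.
by rewrite /= xs andbT.
Qed.

Lemma card_set_in_count (T : finType) (A : {set T}) (P : pred T) :
  #|[set u in A | P u]| = count P (enum A).
Proof.
rewrite cardsE cardE -size_filter /enum_mem -filter_predI; congr size.
by apply: eq_filter => u /=; rewrite andbC.
Qed.

Lemma map_nth_index (T : eqType) (S : Type) (x0 : T) (y0 : S) (L : seq T) (s : seq S) :
  uniq L -> size L = size s -> map (fun x => nth y0 s (index x L)) L = s.
Proof.
move=> uL sz; apply: (eq_from_nth (x0 := y0)) => [|j]; rewrite size_map // => jL.
by rewrite (nth_map x0) // index_uniq // -sz.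
Qed.

Lemma sum_count_mem n (P : pred nat) ps : all (fun p => p < n) ps ->
  \sum_(i < n | P i) count_mem (val i) ps = count P ps.
Proof.
elim: ps => [|p ps IH] /=; first by rewrite big1.
case/andP=> p_n ps_n; rewrite big_split /= IH //; congr (_ + _).
case: (boolP (P p)) => Pp; last first.
  by rewrite big1 // => i Pi; case: eqP => // p_i; rewrite p_i Pi in Pp.
rewrite (bigD1 (Ordinal p_n)) //= eqxx big1 // => i /andP[_ i_p].
by case: eqP => // p_i; case/eqP: i_p; apply: val_inj.
Qed.

Lemma eq_from_leq_sum (I : finType) (F G : I -> nat) :
  (forall i, F i <= G i) -> \sum_i F i = \sum_i G i -> forall i, F i = G i.
Proof.
move=> FG /eqP; rewrite (leqif_sum (fun i _ => leqif_eq (FG i))).2.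
by move=> /forallP FG_eq i; apply/eqP/FG_eq.
Qed.

Definition picks (L : seq (nat * nat)) (ps : seq nat) :=
  all2 (fun x p => x.1 <= p < x.2) L ps.

Definition inside s t (x : nat * nat) := (s <= x.1) && (x.2 <= t).

Definition hall_cond (L : seq (nat * nat)) (c : nat -> nat) :=
  forall s t, count (inside s t) L <= \sum_(s <= p < t) c p.

Definition weight (L : seq (nat * nat)) := size L + sumn [seq x.2 - x.1 | x <- L].

Lemma hall_cond_nonempty L c x : hall_cond L c -> x \in L -> x.1 < x.2.
Proof.
move=> hallL xL; rewrite ltnNge; apply/negP => x21.
have : has (inside x.1 x.1) L by apply/hasP; exists x; rewrite // /inside leqnn.
by rewrite has_count; move: (hallL x.1 x.1); rewrite big_geq // leqn0 => /eqP->.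
Qed.

Definition bump_left s0 (y : nat * nat) := if y.1 == s0 then (s0.+1, y.2) else y.

Lemma picks_bump_left s0 L ps : picks (map (bump_left s0) L) ps -> picks L ps.
Proof.
elim: L ps => [|y L IH] [|p ps] //= /andP[yp /IH ->].
by move: yp; rewrite /bump_left andbT; case: eqP => //= -> /andP[/ltnW ->].
Qed.

Lemma sumn_len_bump_left s0 L : (forall y, y \in L -> y.1 = s0 -> s0.+1 < y.2) ->
  sumn [seq x.2 - x.1 | x <- map (bump_left s0) L] + count (fun y : nat * nat => y.1 == s0) L
  = sumn [seq x.2 - x.1 | x <- L].
Proof.
elim: L => //= y L IH long; rewrite -IH => [|z zL]; last first.
  by apply: long; rewrite inE zL orbT.
rewrite /bump_left; case: eqP => /= [y1|_]; last lia.
by have := long y (mem_head _ _) y1; lia.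
Qed.

Section BumpLeft.
Variables (L : seq (nat * nat)) (c : nat -> nat) (s0 : nat).
Hypotheses (hallL : hall_cond L c) (c_s0 : c s0 = 0).

(* An interval [s0, s0 + 1) would need capacity at s0. *)
Lemma long_at_empty_point y : y \in L -> y.1 = s0 -> s0.+1 < y.2.
Proof.
move=> yL y1; rewrite ltnNge; apply/negP => y2.
have : has (inside s0 s0.+1) L by apply/hasP; exists y; rewrite // /inside y1 leqnn.
by rewrite has_count; move: (hallL s0 s0.+1); rewrite big_nat1 c_s0 leqn0 => /eqP->.
Qed.

Lemma weight_bump_left : has (fun y : nat * nat => y.1 == s0) L ->
  weight (map (bump_left s0) L) < weight L.
Proof.
rewrite has_count /weight size_map -(sumn_len_bump_left long_at_empty_point).
lia.
Qed.

Lemma hall_bump_left : hall_cond (map (bump_left s0) L) c.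
Proof.
move=> s t; rewrite count_map.
case: (eqVneq s s0.+1) => [->|s_ne].
  apply: leq_trans (_ : count (inside s0 t) L <= _).
    apply: sub_count => y; rewrite /inside /bump_left /=.
    by case: eqP => [->|_] /=; [rewrite !leqnn | case/andP => /ltnW -> ->].
  apply: leq_trans (hallL s0 t) _; case: (ltnP s0 t) => [s0_t | t_s0].
    by rewrite big_ltn // c_s0.
  by rewrite !big_geq // leqW.
rewrite (@eq_count _ _ (inside s t)) // => y; rewrite /inside /bump_left /=.
by case: eqP => //= ->; rewrite leq_eqVlt (negbTE s_ne).
Qed.

End BumpLeft.

Section Assign.
Variables (L1 L2 : seq (nat * nat)) (c : nat -> nat) (s0 t0 : nat).
Let L := L1 ++ (s0, t0) :: L2.
Hypotheses (hallL : hall_cond L c) (c_s0 : 0 < c s0).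
Hypotheses (s0_min : forall y, y \in L -> s0 <= y.1)
  (t0_min : forall y, y \in L -> y.1 = s0 -> t0 <= y.2).

Lemma hall_assign : hall_cond (L1 ++ L2) (fun p => c p - (p == s0)).
Proof.
move=> s t.
have countL : count (inside s t) L = count (inside s t) (L1 ++ L2) + inside s t (s0, t0).
  by rewrite /L !count_cat /=; lia.
have sumB : \sum_(s <= p < t) (c p - (p == s0)) = \sum_(s <= p < t) c p - (s <= s0 < t).
  rewrite sumnB => [|p _]; last by case: eqP => [->|].
  rewrite [X in _ - X](eq_bigr (fun p => if p == s0 then 1 else 0)) => [|p _].
    by rewrite -big_mkcond big_nat1_eq; case: ifP.
  by case: (p == s0).
case: (boolP (s <= s0 < t)) => [/andP[s_s0 s0_t]| s0_out]; last first.
  by rewrite sumB (negbTE s0_out) subn0 (leq_trans _ (hallL s t)) // countL leq_addr.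
case: (boolP (inside s t (s0, t0))) => [in0 | out0].
  by rewrite sumB; move: (hallL s t); rewrite countL in0; lia.
(* No interval inside [s, t) starts at s0: it would end before t0. *)
have : count (inside s t) L <= \sum_(s0.+1 <= p < t) c p.
  apply: leq_trans (hallL s0.+1 t); apply: sub_in_count => y yL /andP[_ yt].
  rewrite /inside yt andbT ltn_neqAle s0_min // andbT; apply/eqP => y1.
  move: out0; rewrite /inside s_s0 /= -ltnNge => /leq_trans.
  by move=> /(_ _ (t0_min yL (esym y1))); rewrite ltnNge yt.
rewrite sumB countL (negbTE out0) addn0 s_s0 s0_t (big_cat_nat s_s0 (ltnW s0_t)).
rewrite [\sum_(s0 <= _ < t) _]big_ltn //=; lia.
Qed.

End Assign.

Lemma picks_insert L1 L2 ps x p : picks (L1 ++ L2) ps -> x.1 <= p < x.2 ->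
  picks (L1 ++ x :: L2) (take (size L1) ps ++ p :: drop (size L1) ps).
Proof.
move=> picksL xp.
have sz1 : size (take (size L1) ps) = size L1.
  by rewrite size_takel // -(all2_size picksL) size_cat leq_addr.
move: picksL; rewrite -{1}(cat_take_drop (size L1) ps) /picks !all2_cat //=.
by rewrite xp.
Qed.

Theorem interval_hall L c : hall_cond L c ->
  exists ps, picks L ps /\ forall p, count_mem p ps <= c p.
Proof.
move: {2}(weight L).+1 (ltnSn (weight L)) => N.
elim: N L c => // N IH L c wL hallL.
case: (boolP (nilp L)) => [/nilP-> | L_ne]; first by exists [::].
have ex_left : exists s, has (fun y : nat * nat => y.1 == s) L.
  by case: L L_ne {wL hallL} => // y L _; exists y.1; rewrite /= eqxx.
case: (ex_minnP ex_left) => s0 has_s0 s0_min.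
have {}s0_min y : y \in L -> s0 <= y.1.
  by move=> yL; apply: s0_min; apply/hasP; exists y.
case: (posnP (c s0)) => c_s0.
  have [|ps [picksL capL]] := IH _ c _ (hall_bump_left hallL c_s0).
    exact: leq_trans (weight_bump_left hallL c_s0 has_s0) _.
  by exists ps; split => //; apply: picks_bump_left picksL.
have ex_right : exists t, (s0, t) \in L.
  by case/hasP: has_s0 => -[s t] yL /= /eqP <-; exists t.
case: (ex_minnP ex_right) => t0 s0t0L t0_min.
have {}t0_min y : y \in L -> y.1 = s0 -> t0 <= y.2.
  by case: y => s t yL /= y1; apply: t0_min; rewrite -y1.
have s0_t0 := hall_cond_nonempty hallL s0t0L.
case/splitPr: s0t0L => L1 L2 in wL hallL s0_min t0_min *.
have [|ps [picksL capL]] := IH _ _ _ (hall_assign hallL c_s0 s0_min t0_min).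
  by move: wL; rewrite /weight !size_cat !map_cat !sumn_cat /=; lia.
exists (take (size L1) ps ++ s0 :: drop (size L1) ps); split.
  by apply: picks_insert; rewrite //= leqnn.
move=> p; have := capL p; rewrite -[in X in X <= _ -> _](cat_take_drop (size L1) ps).
by rewrite !count_cat /=; case: (eqVneq p s0) => [->|_] /=; rewrite ?subn0; lia.
Qed.

Section MPolyCoef.
Local Open Scope ring_scope.
Variable n : nat.
Implicit Types (p q r : mpoly n) (m : monom n).

Definition mon_divvar m (i : 'I_n) : monom n :=
  [ffun j => if j == i then (m j).-1 else m j].

Definition coef_divvar r m (i : 'I_n) : int :=
  if (0 < m i)%N then mp_coef r (mon_divvar m i) else 0.

Lemma mon_mul_var_eq i x m :
  (mon_mul (mon_var i) x == m) = (0 < m i)%N && (x == mon_divvar m i).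
Proof.
apply/eqP/andP => [<-|[m_i /eqP ->]].
  split; first by rewrite !ffunE eqxx.
  by apply/eqP/ffunP => j; rewrite !ffunE; case: eqP => [->|]; rewrite ?ffunE ?eqxx.
apply/ffunP => j; rewrite !ffunE; case: (eqVneq j i) => [->|_] /=.
  by rewrite add1n prednK.
by rewrite add0n.
Qed.

Lemma mp_coef_add p q m : mp_coef (mp_add p q) m = mp_coef p m + mp_coef q m.
Proof. by rewrite /mp_coef big_cat. Qed.

Lemma mp_coef_opp p m : mp_coef (mp_opp p) m = - mp_coef p m.
Proof. by rewrite /mp_coef big_map -sumrN. Qed.

Lemma mp_mulDl p1 p2 q : mp_mul (mp_add p1 p2) q = mp_add (mp_mul p1 q) (mp_mul p2 q).
Proof. exact: allpairs_cat. Qed.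

Lemma mp_mulNl p q : mp_mul (mp_opp p) q = mp_opp (mp_mul p q).
Proof.
rewrite /mp_mul /mp_opp allpairs_mapl map_allpairs.
by apply: eq_allpairs => a b /=; rewrite mulNr.
Qed.

Lemma mp_coef_mul_var i r m : mp_coef (mp_mul (mp_var i) r) m = coef_divvar r m i.
Proof.
rewrite /mp_mul /mp_var allpairs1l /mp_coef big_map.
under eq_bigl do rewrite mon_mul_var_eq.
rewrite /coef_divvar; case: (0 < m i)%N; last by rewrite big_pred0.
by apply: eq_bigr => a _; rewrite mul1r.
Qed.

Lemma mp_coef_mul_sum_vars (s : seq 'I_n) r m :
  mp_coef (mp_mul (foldr (@mp_add n) (mp_zero n) (map (@mp_var n) s)) r) m
  = \sum_(i <- s) coef_divvar r m i.
Proof.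
elim: s => [|i s IH]; first by rewrite big_nil /mp_coef big_nil.
by rewrite big_cons -IH -mp_coef_mul_var -mp_coef_add -mp_mulDl.
Qed.

End MPolyCoef.

Section VFactor.
Local Open Scope ring_scope.

Lemma mp_coef_mul_lambda k j (r : mpoly k.-1) m :
  mp_coef (mp_mul (lambda k j) r) m = \sum_(i < k.-1 | (j <= i)%N) coef_divvar r m i.
Proof. by rewrite /lambda mp_coef_mul_sum_vars big_filter big_enum_cond. Qed.

Definition vfactor k (x : nat * nat) : mpoly k.-1 := mp_sub (lambda k x.2) (lambda k x.1).

Lemma mp_coef_mul_vfactor k x (r : mpoly k.-1) m : (x.1 <= x.2)%N ->
  mp_coef (mp_mul (vfactor k x) r) m
  = - \sum_(i < k.-1 | (x.1 <= i < x.2)%N) coef_divvar r m i.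
Proof.
move=> x12; rewrite /vfactor /mp_sub mp_mulDl mp_coef_add mp_mulNl mp_coef_opp.
rewrite !mp_coef_mul_lambda [X in _ - X](bigID (fun i : 'I_k.-1 => (i < x.2)%N)) /=.
rewrite [X in _ - (_ + X)](eq_bigl (fun i : 'I_k.-1 => (x.2 <= i)%N)) => [|i].
  by rewrite opprD addrCA subrr addr0.
by rewrite -leqNgt andbC; case: leqP => // /(leq_trans x12) ->.
Qed.

Fixpoint npicks n (L : seq (nat * nat)) (m : monom n) : nat :=
  if L is x :: L' then
    \sum_(i < n | (x.1 <= i < x.2)%N)
       (if (0 < m i)%N then npicks L' (mon_divvar m i) else 0)
  else m == mon_one n.

Lemma mp_coef_prod_vfactor k L (m : monom k.-1) : all (fun x => x.1 <= x.2)%N L ->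
  mp_coef (foldr (@mp_mul _) (mp_one _) (map (vfactor k) L)) m
  = (-1) ^+ size L * (npicks L m)%:Z.
Proof.
elim: L m => [|x L IH] m /=.
  by rewrite /mp_coef big_cons big_nil addr0 mul1r eq_sym; case: (_ == _).
case/andP => x12 L12; rewrite mp_coef_mul_vfactor // -natz natr_sum mulr_sumr -sumrN.
apply: eq_bigr => i _; rewrite /coef_divvar; case: ifP => _; last by rewrite mulr0 oppr0.
by rewrite IH // natz exprS mulN1r mulNr.
Qed.

End VFactor.

Lemma count_mem_cons n (i : 'I_n) ps (m : monom n) :
  (forall j : 'I_n, count_mem (val j) (val i :: ps) = m j) <->
  0 < m i /\ forall j : 'I_n, count_mem (val j) ps = mon_divvar m i j.
Proof.
split=> [cnt | [m_i cnt] j].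
  split=> [|j]; first by rewrite -cnt /= eqxx.
  by rewrite ffunE -cnt /= (inj_eq val_inj); case: (eqVneq j i).
rewrite /= cnt ffunE (inj_eq val_inj).
by case: (eqVneq j i) => [->|]; rewrite ?add1n ?prednK.
Qed.

Lemma npicks_gt0 n L (m : monom n) : all (fun x => x.2 <= n) L ->
  0 < npicks L m <->
  exists ps, picks L ps /\ forall i : 'I_n, count_mem (val i) ps = m i.
Proof.
elim: L m => [|x L IH] m /=.
  move=> _; rewrite lt0n eqb0 negbK; split=> [/eqP-> | [[|p ps] [// _ cnt]]].
    by exists [::]; split=> // i; rewrite ffunE.
  by apply/eqP/ffunP => i; rewrite -cnt ffunE.
case/andP=> x2n Ln; rewrite lt0n sum_nat_eq0 negb_forall; split.
  case/existsP=> i; rewrite negb_imply => /andP[x_i]; case: ifP => // m_i.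
  rewrite -lt0n => /(IH _ Ln) [ps [picksL cnt]].
  by exists (val i :: ps); split; [rewrite /picks /= x_i | apply/count_mem_cons].
case=> -[|p ps] [//= /andP[x_p picksL] cnt].
have p_n : p < n by case/andP: x_p => _ /leq_trans; apply.
have /count_mem_cons [m_p cnt_p] := cnt : forall j, count_mem _ (val (Ordinal p_n) :: ps) = _.
apply/existsP; exists (Ordinal p_n); rewrite negb_imply x_p m_p -lt0n.
by apply/IH => //; exists ps.
Qed.

Definition lt_pairs k : seq (nat * nat) :=
  flatten [seq [seq (i, j) | j <- iota 0 k & i < j] | i <- iota 0 k].

Lemma Vpoly_prod k : Vpoly k = foldr (@mp_mul _) (mp_one _) (map (vfactor k) (lt_pairs k)).
Proof.
rewrite /Vpoly /lt_pairs map_flatten -map_comp; congr (foldr _ _ (flatten _)).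
by apply: eq_map => i /=; rewrite -map_comp.
Qed.

Lemma mem_lt_pairs k x : (x \in lt_pairs k) = (x.1 < x.2 < k).
Proof.
case: x => i j; apply/flattenP/idP => /= [[_ /mapP[i' _ ->]] | /andP[ij jk]].
  by case/mapP=> j'; rewrite mem_filter mem_iota => /andP[? /andP[_ ?]] [-> ->]; apply/andP.
exists [seq (i, j) | j <- iota 0 k & i < j].
  by apply: map_f; rewrite mem_iota /= (ltn_trans ij).
by apply: map_f; rewrite mem_filter ij mem_iota.
Qed.

Lemma lt_pairs_uniq k : uniq (lt_pairs k).
Proof.
apply: allpairs_uniq_dep => [||[i1 j1] [i2 j2] _ _ [-> ->]] //; first exact: iota_uniq.
by move=> i _; rewrite filter_uniq ?iota_uniq.
Qed.

Lemma count_iota_between a c k : count (fun j => a <= j < c) (iota 0 k) = minn c k - a.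
Proof.
elim: k => [|k IH]; first by rewrite minn0.
by rewrite -addn1 iotaD count_cat IH /= add0n addn0; case: (leqP a k); case: (ltnP k c); lia.
Qed.

Lemma sum_subn_bin2 s u k : u < k -> \sum_(s <= i < k) (u - i) = 'C(u.+1 - s, 2).
Proof.
move=> uk; case: (leqP s u) => [su|us]; last first.
  rewrite bin_small; last lia.
  by apply: big1_seq => i; rewrite mem_index_iota; lia.
rewrite (big_cat_nat (n := u.+1)) ?(leqW su) //= [X in _ + X]big1_seq => [|i]; last first.
  by rewrite mem_index_iota; lia.
rewrite addn0 big_nat_rev (eq_big_nat _ _ (F2 := fun i => i - s)) => [|i]; last lia.
rewrite -{1}[s]add0n big_addn (eq_big_nat _ _ (F2 := id)) => [|i]; last lia.
exact: bin2_sum.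
Qed.

Lemma count_inside_lt_pairs k s u : u < k ->
  count (inside s u) (lt_pairs k) = 'C(u.+1 - s, 2).
Proof.
move=> uk; rewrite -(sum_subn_bin2 s uk) (big_nat_widenl s 0) //.
rewrite /lt_pairs count_flatten sumnE !big_map big_mkcond /index_iota subn0 /=.
apply: eq_bigr => i _; rewrite count_map count_filter.
case: leqP => [si | i_s]; last first.
  apply/eqP; rewrite -leqn0 leqNgt -has_count; apply/hasPn => j _ /=.
  by rewrite /inside /= leqNgt i_s.
rewrite (@eq_count _ _ (fun j => i.+1 <= j < u.+1)) => [|j]; last first.
  by rewrite /= /inside /= si ltnS andbC.
by rewrite count_iota_between; lia.
Qed.

Lemma size_lt_pairs k : size (lt_pairs k.+1) = 'C(k.+1, 2).
Proof.
rewrite -(count_predT (lt_pairs _)) -(@eq_in_count _ (inside 0 k)) => [|x].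
  by rewrite count_inside_lt_pairs.
by rewrite mem_lt_pairs /inside /= ltnS => /andP[_ ->].
Qed.

Section MatchingFibers.
Variables (I T : finType) (b : I -> nat) (A : {set T}) (adj : T -> I -> bool).

Definition labelling (g : T -> I) :=
  (forall u, u \in A -> adj u (g u)) /\ forall i, #|[set u in A | g u == i]| = b i.

Lemma card_fiber_tag i : #|[set d : {j : I & 'I_(b j)} | tag d == i]| = b i.
Proof.
rewrite -[RHS]card_ord -(card_imset _ (@eq_from_Tagged _ (fun j => 'I_(b j)) i)).
apply: eq_card => -[j t]; rewrite inE /=; apply/eqP/imsetP => [ji | [t' _ /(congr1 tag) //]].
by subst j; exists t.
Qed.

Lemma labelling_matching g : labelling g ->
  exists f : {i : I & 'I_(b i)} -> T, injective f /\ forall d, adj (f d) (tag d).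
Proof.
case=> adj_g card_g.
pose f (d : {i : I & 'I_(b i)}) := enum_val (cast_ord (esym (card_g (tag d))) (tagged d)).
have fP d : f d \in A /\ g (f d) = tag d.
  have := enum_valP (cast_ord (esym (card_g (tag d))) (tagged d)).
  by rewrite inE => /andP[-> /eqP].
exists f; split=> [[i1 t1] [i2 t2] f12 | d]; last by have [fA <-] := fP d; apply: adj_g.
have e12 : i2 = i1 by move: (fP (Tagged _ t1)).2; rewrite f12 (fP (Tagged _ t2)).2.
by subst i2; move/enum_val_inj/cast_ord_inj: f12 => /= ->.
Qed.

Lemma matching_labelling (i0 : I) :
  (forall u i, adj u i -> u \in A) -> \sum_i b i = #|A| ->
  (exists f : {i : I & 'I_(b i)} -> T, injective f /\ forall d, adj (f d) (tag d)) ->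
  exists g, labelling g.
Proof.
move=> adjA sumA [f [f_inj adj_f]].
have imf : f @: setT = A.
  apply/eqP; rewrite eqEcard card_imset // cardsT card_tagged sumnE big_map big_enum.
  rewrite -sumA (eq_bigr _ (fun i _ => card_ord (b i))) leqnn andbT.
  by apply/subsetP => _ /imsetP[d _ ->]; apply: adjA (adj_f d).
pose g u := if [pick d | f d == u] is Some d then tag d else i0.
have gK d : g (f d) = tag d.
  by rewrite /g; case: pickP => [d' /eqP/f_inj -> | /(_ d)] //; rewrite eqxx.
exists g; split=> [u | i].
  by rewrite -imf => /imsetP[d _ ->]; rewrite gK.
rewrite -card_fiber_tag -(card_imset _ f_inj).
apply: eq_card => u; rewrite inE -imf; apply/andP/imsetP => [[/imsetP[d _ ->]] | [d]].
  by rewrite gK => tag_d; exists d; rewrite ?inE.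
by rewrite inE => tag_d ->; rewrite gK imset_f ?inE.
Qed.

End MatchingFibers.

Section TriangleMatching.
Variables (n' : nat) (b : 'I_n'.+1 -> nat).
Local Notation n := n'.+1.
Local Notation L := (lt_pairs n.+1).

Definition upper := [set u : 'I_n * 'I_n | u.1 <= u.2].
Definition spans (u : 'I_n * 'I_n) (i : 'I_n) := u.1 <= i <= u.2.

(* The upper vertex (j, l) corresponds to the factor of [Vpoly] indexed by [(j, l + 1)]. *)
Definition half_open (u : 'I_n * 'I_n) := (val u.1, (val u.2).+1).
Definition closed (x : nat * nat) : 'I_n * 'I_n := (inord x.1, inord x.2.-1).

Definition picks_exact (ps : seq nat) :=
  picks L ps /\ forall i : 'I_n, count_mem (val i) ps = b i.

Lemma half_openK : cancel half_open closed.
Proof. by case=> i j; rewrite /closed /= !inord_val. Qed.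

Lemma closedK x : x \in L -> half_open (closed x) = x.
Proof.
case: x => i j; rewrite mem_lt_pairs /= => /andP[ij jn].
by rewrite /half_open /= !inordK ?prednK //; lia.
Qed.

Lemma count_lt_pairs_upper (P : pred (nat * nat)) :
  count P L = #|[set u in upper | P (half_open u)]|.
Proof.
have perm_upper : perm_eq (map half_open (enum upper)) L.
  apply: uniq_perm; rewrite ?lt_pairs_uniq ?(map_inj_uniq (can_inj half_openK)) ?enum_uniq //.
  move=> x; rewrite mem_lt_pairs; apply/mapP/idP => [[u] | x_lt].
    by rewrite mem_enum inE /= => u12 ->; rewrite /= ltnS u12 ltnS ltn_ord.
  exists (closed x); last by rewrite closedK ?mem_lt_pairs.
  case: x x_lt => i [|j] //= /andP[ij jn]; rewrite mem_enum inE /= !inordK; lia.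
by rewrite -(permP perm_upper) count_map card_set_in_count.
Qed.

Lemma lt_pairs_bound : all (fun x => x.2 <= n) L.
Proof. by apply/allP => x; rewrite mem_lt_pairs => /andP[_]. Qed.

Lemma card_upper : #|upper| = 'C(n.+1, 2).
Proof.
rewrite -size_lt_pairs -count_predT count_lt_pairs_upper.
by apply: eq_card => u; rewrite inE andbT.
Qed.

Lemma picks_at_index x ps : picks L ps -> x \in L ->
  x.1 <= nth 0 ps (index x L) < x.2.
Proof.
move=> picksL xL; have xi : index x L < size L by rewrite index_mem.
by have := all2_nth (0, 0) 0 picksL xi; rewrite nth_index.
Qed.

Lemma labelling_picks_exact g : labelling b upper spans g -> exists ps, picks_exact ps.
Proof.
case=> spans_g card_g; exists [seq val (g (closed x)) | x <- L]; split=> [|i].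
  rewrite /picks all2_mapr; apply/allP => -[i [|j]]; rewrite mem_lt_pairs //= => /andP[ij jn].
  by have := spans_g (closed (i, j.+1)); rewrite /spans inE /= !inordK; lia.
rewrite count_map (eq_count (a2 := fun x => g (closed x) == i)) => [|x]; last first.
  by rewrite /= (inj_eq val_inj).
by rewrite count_lt_pairs_upper -card_g; apply: eq_card => u; rewrite !inE half_openK.
Qed.

Lemma picks_exact_labelling ps : picks_exact ps -> exists g, labelling b upper spans g.
Proof.
case=> picksL cnt; pose h x := nth 0 ps (index x L).
have h_lt x : x \in L -> h x < n.
  by move=> xL; have := picks_at_index picksL xL; rewrite mem_lt_pairs in xL; rewrite /h; lia.
exists (fun u => inord (h (half_open u))); split=> [u | i].
  rewrite inE => u12; have uL : half_open u \in L.
    by rewrite mem_lt_pairs /= ltnS u12 ltnS ltn_ord.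
  by have := picks_at_index picksL uL; rewrite /spans inordK ?h_lt //= ltnS.
rewrite -cnt -(count_lt_pairs_upper (fun x => inord (h x) == i)).
rewrite -[in RHS](map_nth_index (0, 0) 0 (lt_pairs_uniq _) (all2_size picksL)) count_map.
by apply: eq_in_count => x xL; rewrite /= -val_eqE /= inordK ?h_lt.
Qed.

Lemma matching_seq_labelling : \sum_i b i = 'C(n.+1, 2) ->
  matching_seq b -> exists g, labelling b upper spans g.
Proof.
move=> sum_b [f [f_inj f_spans]]; apply: (matching_labelling ord0) => [u i||].
- by rewrite inE => /andP[/leq_trans]; apply.
- by rewrite card_upper.
- by exists f; split=> // d; apply/andP; apply: f_spans.
Qed.

Lemma labelling_matching_seq g : labelling b upper spans g -> matching_seq b.
Proof.
case/labelling_matching=> f [f_inj f_spans]; exists f; split=> // d.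
by apply/andP; apply: f_spans.
Qed.

Lemma coef_Vpoly_neq0 :
  (mp_coef (Vpoly n.+1) [ffun i => b i] != 0)%R <-> exists ps, picks_exact ps.
Proof.
have L12 : all (fun x => x.1 <= x.2) L.
  by apply/allP => x; rewrite mem_lt_pairs => /andP[/ltnW].
rewrite Vpoly_prod mp_coef_prod_vfactor // mulf_eq0 signr_eq0 /= -lt0n.
rewrite (npicks_gt0 _ lt_pairs_bound).
by split=> -[ps [picksL cnt]]; exists ps; split=> // i; rewrite cnt ffunE.
Qed.

Definition window_cond := forall s t : 'I_n, s <= t ->
  'C(t - s + 2, 2) <= \sum_(i < n | s <= i <= t) b i.

Lemma picks_lt_pairs_bound ps : picks L ps -> all (fun p => p < n) ps.
Proof.
move=> picksL; apply: all2_allr lt_pairs_bound picksL _ => x p x2 /andP[_ /leq_trans].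
exact.
Qed.

Lemma picks_exact_window_cond ps : picks_exact ps -> window_cond.
Proof.
case=> picksL cnt s t st; rewrite (eq_bigr (fun i => count_mem (val i) ps)) => [|i _].
  rewrite (sum_count_mem (fun p => s <= p <= t)) ?picks_lt_pairs_bound //.
  rewrite (_ : t - s + 2 = t.+2 - s); last lia.
  have t_n : t.+1 < n.+1 by rewrite ltnS.
  rewrite -(count_inside_lt_pairs s t_n).
  by apply: (leq_count_all2 picksL) => x p /=; rewrite /inside; lia.
exact/esym/cnt.
Qed.

Lemma sum_window s u : u < n ->
  \sum_(s <= p < u.+1) b (inord p) = \sum_(i < n | s <= i <= u) b i.
Proof.
move=> u_n; rewrite big_geq_mkord.
rewrite (big_ord_widen_cond n (fun i => true && (s <= i)) (fun i => b (inord i))) //.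
by apply: eq_big => [i | i _]; rewrite ?inord_val // ltnS.
Qed.

(* [inord p] is junk for [p >= n], but no interval of [L] reaches past [n]. *)
Lemma window_hall_cond : window_cond -> hall_cond L (fun p => b (inord p)).
Proof.
move=> win s t; rewrite (@eq_in_count _ _ (inside s (minn t n))) => [|x]; last first.
  by rewrite mem_lt_pairs /inside leq_min => /andP[_ x2]; rewrite (_ : x.2 <= n) ?andbT.
rewrite count_inside_lt_pairs ?ltnS ?geq_minr //.
case: (ltnP s (minn t n)) => [|t_s]; last by rewrite bin_small //; lia.
case E: (minn t n) => [//|u] s_u; have u_n : u < n by rewrite -E geq_minr.
have := win (Ordinal (leq_ltn_trans (s_u : s <= u) u_n)) (Ordinal u_n) s_u.
rewrite /= -sum_window // (_ : u - s + 2 = u.+2 - s); last lia.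
have u_t : u.+1 <= t by rewrite -E geq_minl.
by move/leq_trans; apply; rewrite [X in _ <= X](big_cat_nat (n := u.+1)) ?leq_addr // ltnW.
Qed.

Lemma window_cond_picks_exact : \sum_i b i = 'C(n.+1, 2) -> window_cond ->
  exists ps, picks_exact ps.
Proof.
move=> sum_b /window_hall_cond /interval_hall [ps [picksL cap]].
exists ps; split=> //; apply: eq_from_leq_sum => [i|].
  by have := cap i; rewrite inord_val.
rewrite (sum_count_mem predT) ?picks_lt_pairs_bound // count_predT sum_b.
by rewrite -(all2_size picksL) size_lt_pairs.
Qed.

End TriangleMatching.

Local Open Scope ring_scope.

Theorem mainTheorem7 (k : nat) (hk : (2 <= k)%N) (b : 'I_k.-1 -> nat)
  (hb : (\sum_(i < k.-1) b i)%N = 'C(k, 2)) :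
  [<-> perfect_matching_seq b;
       mp_coef (Vpoly k) [ffun i => b i] != 0;
       forall s t : 'I_k.-1, (s <= t)%N ->
         ('C(t - s + 2, 2) <= \sum_(i < k.-1 | (s <= i <= t)%N) b i)%N].
Proof.
case: k hk b hb => [|[|n']] // _ b hb; split; [|split].
- case=> /(matching_seq_labelling hb) [g /labelling_picks_exact picks_b] _.
  exact/coef_Vpoly_neq0.
- by case/coef_Vpoly_neq0 => ps /picks_exact_window_cond.
- case/(window_cond_picks_exact hb) => ps /picks_exact_labelling [g /labelling_matching_seq].
  by split.
Qed.
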